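(* Let $\mathbf{X}=\{\mathbf{x}\in\mathbb{R}^n:g_1(\mathbf{x})\ge0,\dots,g_m(\mathbf{x})\ge0\}$ be compact, with $g_j\in\mathbb{R}[\mathbf{x}]$, and let $p_1,\dots,p_t,q_1,\dots,q_t\in\mathbb{R}[\mathbf{x}]$ with each $q_i$ positive on $\mathbf{X}$. Let $f_{\min}=\inf_{\mathbf{x}\in\mathbf{X}}\sum_{i=1}^t p_i(\mathbf{x})/q_i(\mathbf{x})$ and $$f_{\mathrm{meas}}=\inf_{\mu_1,\dots,\mu_t\in\mathscr{M}_+(\mathbf{X})}\Big\{\sum_{i=1}^t\int_{\mathbf{X}}p_i\,\mathrm{d}\mu_i:\ \int_{\mathbf{X}}\mathbf{x}^{\alpha}q_i\,\mathrm{d}\mu_i=\int_{\mathbf{X}}\mathbf{x}^{\alpha}q_1\,\mathrm{d}\mu_1\ \ (\alpha\in\mathbb{N}^n,\ i=2,\dots,t),\ \int_{\mathbf{X}}q_1\,\mathrm{d}\mu_1=1\Big\}.$$ Then $f_{\mathrm{meas}}=f_{\min}$.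
   Context: $\mathscr{M}_+(\mathbf{X})$ denotes the cone of finite nonnegative Borel measures supported on $\mathbf{X}$; $\mathbf{x}^\alpha=x_1^{\alpha_1}\cdots x_n^{\alpha_n}$. *)

From HB Require Import structures.
From mathcomp Require Import all_boot all_order all_algebra.
From mathcomp Require Import all_classical all_reals all_analysis.
From mathcomp Require multinomials.mpoly.
Set Implicit Arguments.
Unset Strict Implicit.
Unset Printing Implicit Defensive.
Import Order.TTheory GRing.Theory Num.Theory.
Import numFieldTopology.Exports numFieldNormedType.Exports.
Local Open Scope classical_set_scope.
Local Open Scope ring_scope.

(* Points of R^n are n-tuples; n.-tuple R carries the product (= Borel)
   sigma-algebra of mathcomp-analysis. *)

Definition rpoly (R : realType) (n : nat) := multinomials.mpoly.mpoly n R.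

Definition evalp (R : realType) (n : nat) (p : rpoly R n) (x : n.-tuple R) : R :=
  multinomials.mpoly.meval (fun i => tnth x i) p.

Definition monom (R : realType) (n : nat) (alpha : 'I_n -> nat) (x : n.-tuple R) : R :=
  \prod_(i < n) tnth x i ^+ alpha i.

Definition semialg (R : realType) (n m : nat) (g : 'I_m -> rpoly R n) :
  set (n.-tuple R) := [set x | forall j : 'I_m, 0 <= evalp (g j) x].

(* Identification of n-tuples with row vectors of 'rV[R]_n, used to speak
   about the (Euclidean) topology of R^n. *)
Definition row_of_tuple (R : realType) (n : nat) (x : n.-tuple R) : 'rV[R]_n :=
  \row_i tnth x i.

(* Evaluating at the point masses δ_x / q_i(x), x ∈ X, shows f_meas ≤ f_min.
   Conversely, on the compact set X each p_i / q_i is approximated from below,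
   within ε, by a polynomial H_i with H_i q_i ≤ p_i: a truncated geometric
   series for 1 / q_i.  By linearity the moment constraints give
   ∫ H q_i dμ_i = ∫ H q_0 dμ_0 for every polynomial H, so for feasible μ
     Σ_i ∫ p_i dμ_i ≥ Σ_i ∫ H_i q_i dμ_i = ∫ (Σ_i H_i) q_0 dμ_0
                   ≥ (f_min - t ε) ∫ q_0 dμ_0 = f_min - t ε. *)

From HB Require Import structures.
From mathcomp Require Import all_boot all_order all_algebra.
From mathcomp Require Import all_classical all_reals all_analysis.
From mathcomp Require multinomials.mpoly.
From mathcomp Require Import measurable_realfun ring lra.
Set Implicit Arguments.
Unset Strict Implicit.
Unset Printing Implicit Defensive.
Import Order.TTheory GRing.Theory Num.Theory.
Import numFieldTopology.Exports numFieldNormedType.Exports.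
(* A full [Import] of mpoly clashes with the notations of mathcomp-analysis. *)
Import (canonicals, coercions) multinomials.mpoly.
Local Open Scope classical_set_scope.
Local Open Scope ring_scope.

Section GeometricApproximation.
Context (R : realType).

Lemma inv_geometric_approx (a b y : R) N : 0 < a -> a <= y -> y <= b ->
  `|y^-1 - b^-1 * \sum_(k < N) (1 - b^-1 * y) ^+ k| <= (1 - b^-1 * a) ^+ N / a.
Proof.
move=> a0 ay yb; have y0 := lt_le_trans a0 ay; have b0 := lt_le_trans y0 yb.
set r := 1 - b^-1 * y.
have r0 : 0 <= r by rewrite subr_ge0 mulrC ler_pdivrMr // mul1r.
have r_le : r <= 1 - b^-1 * a by rewrite lerB // ler_pM2l // invr_gt0.
have geom : b^-1 * y * \sum_(k < N) r ^+ k = 1 - r ^+ N.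
  have -> : b^-1 * y = - (r - 1) by rewrite /r; ring.
  by rewrite mulNr -subrX1 opprB.
have -> : y^-1 - b^-1 * \sum_(k < N) r ^+ k = r ^+ N / y.
  rewrite -[r ^+ N](subKr 1) -geom; field.
  by rewrite !gt_eqF.
have yVa : y^-1 <= a^-1 by rewrite lef_pV2.
rewrite ger0_norm; last by rewrite divr_ge0 ?exprn_ge0 // ltW.
apply: ler_pM; rewrite ?exprn_ge0 ?invr_ge0 ?(ltW y0) //.
by rewrite lerXn2r ?nnegrE ?(le_trans r0).
Qed.

Lemma exists_expr_lt (rho eps : R) : 0 <= rho -> rho < 1 -> 0 < eps ->
  exists N, rho ^+ N < eps.
Proof.
move=> rho0 rho1 eps0; have rho_lt1 : `|rho| < 1 by rewrite ger0_norm.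
have [N _ HN] := cvgr_dist_lt _ _ (cvg_expr rho_lt1) _ eps0.
by exists N; have := HN N (leqnn N); rewrite sub0r normrN ger0_norm ?exprn_ge0.
Qed.

End GeometricApproximation.

Section PolynomialFunctions.
Context (R : realType) (n : nat).
Local Notation T := (n.-tuple R).

Lemma evalpE (P : rpoly R n) (x : T) :
  evalp P x = \sum_(m <- mpoly.msupp P) mpoly.mcoeff m P * monom m x.
Proof. exact: mpoly.mevalE. Qed.

Lemma evalpM (P Q : rpoly R n) x : evalp (P * Q) x = evalp P x * evalp Q x.
Proof. exact: rmorphM. Qed.

Lemma measurable_monom (alpha : 'I_n -> nat) :
  measurable_fun setT (@monom R n alpha).
Proof.
apply: measurable_prod => i _.
by apply: measurable_funX; exact: measurable_tnth.
Qed.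

Lemma measurable_evalp (P : rpoly R n) : measurable_fun setT (evalp P).
Proof.
rewrite (funext (evalpE P)); apply: measurable_sum => m.
by apply: measurable_funM; [exact: measurable_cst | exact: measurable_monom].
Qed.

Lemma measurable_semialg m (g : 'I_m -> rpoly R n) : measurable (semialg g).
Proof.
rewrite (_ : semialg g = \bigcap_(j in [set: 'I_m]) (evalp (g j) @^-1` `[0, +oo[)).
  apply: fin_bigcap_measurable => // j _; rewrite -[X in measurable X]setTI.
  by apply: measurable_evalp => //; exact: measurable_itv.
apply/seteqP; split => x /=; rewrite /semialg /=.
  by move=> gx j _ /=; rewrite in_itv /= andbT; exact: gx.
by move=> gx j; have := gx j I; rewrite /= in_itv /= andbT.
Qed.

Lemma continuous_meval_row (P : rpoly R n) :
  continuous (fun v : 'rV[R]_n => mpoly.meval (fun i => v ord0 i) P).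
Proof.
rewrite (funext (fun v => mpoly.mevalE _ _)).
apply: continuous_big => [|m _]; first exact: add_continuous.
move=> v; apply: continuousM; first exact: cst_continuous.
move: v; apply: continuous_big => [|i _]; first exact: mul_continuous.
move=> v; exact: (continuous_comp (@coord_continuous R 1 n ord0 i v)
                                  (@exprn_continuous R (m i) _)).
Qed.

Lemma evalp_row (P : rpoly R n) (x : T) :
  evalp P x = mpoly.meval (fun i => row_of_tuple x ord0 i) P.
Proof. by apply: mpoly.meval_eq => i; rewrite mxE. Qed.

End PolynomialFunctions.

Section CompactBounds.
Context (R : realType) (n : nat) (X : set (n.-tuple R)).
Hypothesis cX : compact (@row_of_tuple R n @` X).

Lemma evalp_bounded (P : rpoly R n) :
  exists M, forall x, X x -> `|evalp P x| <= M.
Proof.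
have cont := continuous_subspaceT (continuous_meval_row (P := P)).
have [M [_ PM]] := compact_bounded (continuous_compact (cont _) cX).
exists (M + 1) => x Xx; rewrite evalp_row.
by apply: PM; [rewrite ltrDl | exists (row_of_tuple x) => //; exists x].
Qed.

Lemma evalp_pos_lbound (Q : rpoly R n) : (forall x, X x -> 0 < evalp Q x) ->
  exists2 a, 0 < a & forall x, X x -> a <= evalp Q x.
Proof.
move=> Qpos; have [[x0 Xx0]|X0] := pselect (X !=set0); last first.
  by exists 1 => // x Xx; case: X0; exists x.
have cont := continuous_subspaceT (continuous_meval_row (P := Q)).
have [_ /set_mem [c Xc <-] cmin] :=
  EVT_min_rV (ex_intro _ (row_of_tuple x0) (ex_intro2 _ _ x0 Xx0 erefl)) cX (cont _).
exists (evalp Q c); first exact: Qpos.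
by move=> x Xx; rewrite !evalp_row; apply: cmin; apply/mem_set; exists x.
Qed.

Lemma evalp_ratio_lower_approx (P Q : rpoly R n) (eps : R) :
  (forall x, X x -> 0 < evalp Q x) -> 0 < eps ->
  exists H : rpoly R n, forall x, X x ->
    evalp H x * evalp Q x <= evalp P x /\ evalp P x / evalp Q x - eps <= evalp H x.
Proof.
move=> Qpos eps0.
have [a a0 aQ] := evalp_pos_lbound Qpos.
have [B QB] := evalp_bounded Q.
have [M PM] := evalp_bounded P.
pose b := Num.max a B.
have b0 : 0 < b by rewrite lt_max a0.
have Qb x : X x -> evalp Q x <= b.
  by move=> Xx; rewrite le_max (le_trans (ler_norm _) (QB x Xx)) orbT.
have M1 : 0 < `|M| + 1 by rewrite ltr_pwDr.
have [N rhoN] : exists N, (1 - b^-1 * a) ^+ N < eps / 2 * a / (`|M| + 1).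
  apply: exists_expr_lt.
  - by rewrite subr_ge0 mulrC ler_pdivrMr // mul1r le_max lexx.
  - by rewrite ltrBlDr ltrDl mulr_gt0 // invr_gt0.
  - by rewrite !mulr_gt0 // invr_gt0.
pose C := @mpoly.mpolyC n R.
(* b^-1 Σ_(k < N) (1 - Q / b)^k is a truncated geometric series for 1 / Q. *)
exists (C b^-1 * P * \sum_(k < N) (1 - C b^-1 * Q) ^+ k - C (eps / 2)) => x Xx.
set S := b^-1 * \sum_(k < N) (1 - b^-1 * evalp Q x) ^+ k.
have -> : evalp (C b^-1 * P * \sum_(k < N) (1 - C b^-1 * Q) ^+ k - C (eps / 2)) x
    = evalp P x * S - eps / 2.
  rewrite /evalp rmorphB !rmorphM rmorph_sum /C /= !mpoly.mevalC /S.
  under eq_bigr do rewrite rmorphXn rmorphB rmorphM rmorph1 /= mpoly.mevalC.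
  by ring.
have err : `|evalp P x / evalp Q x - evalp P x * S| <= eps / 2.
  have PxM : `|evalp P x| <= `|M| + 1.
    by rewrite (le_trans (PM x Xx)) // (le_trans (ler_norm M)) // lerDl.
  rewrite -mulrBr normrM.
  have geom := inv_geometric_approx N a0 (aQ x Xx) (Qb x Xx).
  apply: le_trans (ler_pM _ _ PxM geom) _ => //.
  rewrite mulrA ler_pdivrMr // mulrC -ler_pdivlMr //; exact: ltW.
have Qx := Qpos x Xx.
move: err; rewrite ler_norml => /andP[err1 err2].
by split; [rewrite -ler_pdivlMr //|]; lra.
Qed.

End CompactBounds.

Section MomentCertificate.
Context (R : realType) (n : nat) (X : set (n.-tuple R)).
Hypotheses (mX : measurable X) (cX : compact (@row_of_tuple R n @` X)).
Local Notation fmeasure := {finite_measure set (n.-tuple R) -> \bar R}.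

Lemma integrable_evalp (mu : fmeasure) (P : rpoly R n) :
  mu.-integrable X (EFin \o evalp P).
Proof.
have [M PM] := evalp_bounded cX P.
apply: measurable_bounded_integrable => //.
- by rewrite ltey_eq fin_num_measure.
- exact: measurable_funS measurableT (subsetT X) (measurable_evalp P).
exists M; split; first exact: num_real.
by move=> M' MM' x Xx /=; exact: le_trans (PM x Xx) (ltW MM').
Qed.

Lemma integrable_evalpM (mu : fmeasure) (P Q : rpoly R n) :
  mu.-integrable X (fun x => (evalp P x * evalp Q x)%:E).
Proof.
apply: (eq_integrable mX _ _ _ (integrable_evalp mu (P * Q))) => x _.
by rewrite /= evalpM.
Qed.

Lemma integrable_monomM (mu : fmeasure) (m : mpoly.multinom n) (Q : rpoly R n) :
  mu.-integrable X (fun x => (monom m x * evalp Q x)%:E).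
Proof.
apply: (eq_integrable mX _ _ _ (integrable_evalpM mu (mpoly.mpolyX R m) Q)) => x _.
by rewrite /evalp mpoly.mevalX.
Qed.

Lemma integral_evalpM_monomials (mu : fmeasure) (H Q : rpoly R n) :
  (\int[mu]_(x in X) (evalp H x * evalp Q x)%:E =
   \sum_(m <- mpoly.msupp H) (mpoly.mcoeff m H)%:E *
     \int[mu]_(x in X) (monom m x * evalp Q x)%:E)%E.
Proof.
transitivity (\int[mu]_(x in X) \sum_(m <- mpoly.msupp H)
    (mpoly.mcoeff m H)%:E * (monom m x * evalp Q x)%:E)%E.
  apply: eq_integral => x _; rewrite evalpE mulr_suml -sumEFin.
  by apply: eq_bigr => m _; rewrite -mulrA EFinM.
rewrite integral_sum // => [|m]; last exact/integrableZl/integrable_monomM.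
by apply: eq_bigr => m _; rewrite integralZl //; exact: integrable_monomM.
Qed.

Lemma moments_integral_evalpM (mu0 mu1 : fmeasure) (Q0 Q1 : rpoly R n) :
  (forall alpha : 'I_n -> nat,
    \int[mu1]_(x in X) (monom alpha x * evalp Q1 x)%:E =
    \int[mu0]_(x in X) (monom alpha x * evalp Q0 x)%:E)%E ->
  forall H : rpoly R n,
  (\int[mu1]_(x in X) (evalp H x * evalp Q1 x)%:E =
   \int[mu0]_(x in X) (evalp H x * evalp Q0 x)%:E)%E.
Proof.
move=> mom H; rewrite !integral_evalpM_monomials.
by apply: eq_bigr => m _; rewrite mom.
Qed.

Lemma le_sum_integral_certificate (t : nat) (mu : nat -> fmeasure)
    (p q H : nat -> rpoly R n) (c : R) :
  (forall i, (0 < i < t)%N -> forall alpha : 'I_n -> nat,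
    \int[mu i]_(x in X) (monom alpha x * evalp (q i) x)%:E =
    \int[mu 0%N]_(x in X) (monom alpha x * evalp (q 0%N) x)%:E)%E ->
  (\int[mu 0%N]_(x in X) (evalp (q 0%N) x)%:E = 1)%E ->
  (forall x, X x -> 0 <= evalp (q 0%N) x) ->
  (forall i, (i < t)%N -> forall x, X x ->
     evalp (H i) x * evalp (q i) x <= evalp (p i) x) ->
  (forall x, X x -> c <= \sum_(i < t) evalp (H i) x) ->
  (c%:E <= \sum_(i < t) \int[mu i]_(x in X) (evalp (p i) x)%:E)%E.
Proof.
move=> mom norm q0_ge0 Hp cH.
have transfer (i : 'I_t) :
    (\int[mu i]_(x in X) (evalp (H i) x * evalp (q i) x)%:E =
     \int[mu 0%N]_(x in X) (evalp (H i) x * evalp (q 0%N) x)%:E)%E.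
  have [->//|i0] := eqVneq (val i) 0%N.
  by apply: moments_integral_evalpM; apply: mom; rewrite lt0n i0 ltn_ord.
have int_q0 := integrable_evalp (mu 0%N) (q 0%N).
apply: (@le_trans _ _ (\int[mu 0%N]_(x in X)
    \sum_(i < t) (evalp (H i) x * evalp (q 0%N) x)%:E)%E).
  rewrite -[c%:E]mule1 -norm -integralZl //.
  apply: le_integral => //; first exact: integrableZl.
    by apply: integrable_sum => // i _; exact: integrable_evalpM.
  move=> x /set_mem Xx; rewrite sumEFin -EFinM lee_fin -mulr_suml.
  by apply: ler_wpM2r; [exact: q0_ge0 | exact: cH].
rewrite integral_sum // => [|i]; last exact: integrable_evalpM.
apply: lee_sum => i _; rewrite -transfer.
apply: le_integral => //; [exact: integrable_evalpM | exact: integrable_evalp |].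
by move=> x /set_mem Xx; rewrite lee_fin; exact: Hp.
Qed.

Lemma ratio_lbound_le_sum_integral (t : nat) (mu : nat -> fmeasure)
    (p q : nat -> rpoly R n) (c : R) :
  (0 < t)%N ->
  (forall i, (i < t)%N -> forall x, X x -> 0 < evalp (q i) x) ->
  (forall i, (0 < i < t)%N -> forall alpha : 'I_n -> nat,
    \int[mu i]_(x in X) (monom alpha x * evalp (q i) x)%:E =
    \int[mu 0%N]_(x in X) (monom alpha x * evalp (q 0%N) x)%:E)%E ->
  (\int[mu 0%N]_(x in X) (evalp (q 0%N) x)%:E = 1)%E ->
  (forall x, X x -> c <= \sum_(i < t) evalp (p i) x / evalp (q i) x) ->
  (c%:E <= \sum_(i < t) \int[mu i]_(x in X) (evalp (p i) x)%:E)%E.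
Proof.
move=> t0 qpos mom norm c_le; apply/lee_addgt0Pr => e e0.
have et0 : 0 < e / t%:R by rewrite divr_gt0 // ltr0n.
have /choice[H HH] (i : nat) : exists H : rpoly R n, (i < t)%N -> forall x, X x ->
    evalp H x * evalp (q i) x <= evalp (p i) x /\
    evalp (p i) x / evalp (q i) x - e / t%:R <= evalp H x.
  have [it|_] := ltnP i t; last by exists 0.
  by have [H HH] := evalp_ratio_lower_approx cX (p i) (qpos i it) et0; exists H.
rewrite -leeBlDr // -EFinB.
apply: (le_sum_integral_certificate (H := H) mom norm) => [x Xx|i it x Xx|x Xx].
- exact/ltW/qpos.
- by have [] := HH i it x Xx.
apply: (@le_trans _ _ (\sum_(i < t) (evalp (p i) x / evalp (q i) x - e / t%:R))).
  rewrite sumrB sumr_const card_ord -[_ *+ t]mulr_natr divfK ?pnatr_eq0 -?lt0n //.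
  by rewrite lerB // c_le.
by apply: ler_sum => i _; have [] := HH i (ltn_ord i) x Xx.
Qed.

End MomentCertificate.

Section PointMasses.
Context {d : measure_display} {T : measurableType d} {R : realType}.

Lemma integral_mscale_dirac (w : {nonneg R}) (x : T) (D : set T) (f : T -> R) :
  measurable D -> D x -> measurable_fun D f ->
  (\int[mscale w \d_x]_(y in D) (f y)%:E = (w%:num * f x)%:E)%E.
Proof.
move=> mD Dx mf; have mf' : measurable_fun D (EFin \o f) by exact/measurable_EFinP.
rewrite integralE !ge0_integral_mscale //; last 2 first.
- exact: measurable_funeneg.
- exact: measurable_funepos.
rewrite !integral_dirac //; [|exact: measurable_funeneg|exact: measurable_funepos].
rewrite diracE mem_set // !mul1e funeposE funenegE /=.
rewrite -!EFin_max -!EFinM -EFinB -mulrBr; congr (_ * _)%:E.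
have [f0|f0] := leP 0 (f x).
  by rewrite max_r ?subr0 // oppr_le0.
by rewrite max_l ?sub0r ?opprK // oppr_ge0 ltW.
Qed.

End PointMasses.

Definition point_masses (R : realType) (n : nat) (q : nat -> rpoly R n)
    (x : n.-tuple R) (i : nat) : {finite_measure set (n.-tuple R) -> \bar R} :=
  mscale (NngNum (normr_ge0 (evalp (q i) x)^-1)) \d_x.

Section PointMassesFeasible.
Context (R : realType) (n t : nat) (X : set (n.-tuple R)) (q : nat -> rpoly R n)
  (x : n.-tuple R).
Hypotheses (mX : measurable X) (Xx : X x)
  (qpos : forall i, (i < t)%N -> 0 < evalp (q i) x).

Lemma integral_point_masses i (f : n.-tuple R -> R) :
  (i < t)%N -> measurable_fun setT f ->
  (\int[point_masses q x i]_(y in X) (f y)%:E = (f x / evalp (q i) x)%:E)%E.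
Proof.
move=> it mf; rewrite integral_mscale_dirac //; last first.
  exact: measurable_funS measurableT (subsetT X) mf.
have qi0 := qpos it.
by rewrite [_%:num]/= normfV gtr0_norm // mulrC.
Qed.

Lemma point_masses_feasible : (0 < t)%N ->
  (forall i, (i < t)%N -> point_masses q x i (~` X) = 0%E) /\
  (forall i, (0 < i < t)%N -> forall alpha : 'I_n -> nat,
    (\int[point_masses q x i]_(y in X) (monom alpha y * evalp (q i) y)%:E =
     \int[point_masses q x 0%N]_(y in X) (monom alpha y * evalp (q 0%N) y)%:E)%E) /\
  (\int[point_masses q x 0%N]_(y in X) (evalp (q 0%N) y)%:E = 1)%E.
Proof.
move=> t0; split; [|split].
- move=> i _; rewrite /point_masses [LHS]/= /mscale [LHS]/=.
  by rewrite diracE memNset ?mule0.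
- move=> i /andP[_ it] alpha.
  have mq j : measurable_fun setT (fun y => monom alpha y * evalp (q j) y).
    by apply: measurable_funM; [exact: measurable_monom | exact: measurable_evalp].
  by rewrite !integral_point_masses // !mulfK // gt_eqF // qpos.
- by rewrite integral_point_masses ?divff ?gt_eqF ?qpos //; exact: measurable_evalp.
Qed.

Lemma point_masses_value (p : nat -> rpoly R n) :
  (\sum_(i < t) \int[point_masses q x i]_(y in X) (evalp (p i) y)%:E)%E =
  (\sum_(i < t) evalp (p i) x / evalp (q i) x)%:E.
Proof.
rewrite -sumEFin; apply: eq_bigr => i _.
exact: integral_point_masses (ltn_ord i) (measurable_evalp _).
Qed.

End PointMassesFeasible.

Lemma ereal_inf_EFin_le {R : realType} {T : Type} (A : set T) (f : T -> R)
    (y : \bar R) :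
  A !=set0 -> (forall c, (forall x, A x -> c <= f x) -> (c%:E <= y)%E) ->
  (ereal_inf [set (f x)%:E | x in A] <= y)%E.
Proof.
move=> [x0 Ax0] lb; set S := [set _ | _ in _].
have : forall x, A x -> (ereal_inf S <= (f x)%:E)%E.
  by move=> x Ax; apply: ereal_inf_lbound; exists x.
case: (ereal_inf S) => [c| |] inf_le.
- by apply: lb => x Ax; rewrite -lee_fin inf_le.
- by have := inf_le x0 Ax0; rewrite leye_eq.
- exact: leNye.
Qed.

Theorem theorem3p6 (R : realType) (n m t : nat) (g : 'I_m -> rpoly R n)
    (p q : nat -> rpoly R n) :
  (0 < t)%N ->
  compact (@row_of_tuple R n @` semialg g) ->
  (forall i, (i < t)%N -> forall x, semialg g x -> 0 < evalp (q i) x) ->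
  let X := semialg g in
  let fmin : \bar R :=
    ereal_inf [set (\sum_(i < t) evalp (p i) x / evalp (q i) x)%:E | x in X] in
  let feasible : set (nat -> {finite_measure set (n.-tuple R) -> \bar R}) :=
    [set mu | (forall i, (i < t)%N -> mu i (~` X) = 0%E) /\
              (forall i, (0 < i < t)%N -> forall alpha : 'I_n -> nat,
                 (\int[mu i]_(x in X) (monom alpha x * evalp (q i) x)%:E =
                  \int[mu 0%N]_(x in X) (monom alpha x * evalp (q 0%N) x)%:E)%E) /\
              (\int[mu 0%N]_(x in X) (evalp (q 0%N) x)%:E = 1)%E] in
  let fmeas : \bar R :=
    ereal_inf [set (\sum_(i < t) \int[mu i]_(x in X) (evalp (p i) x)%:E)%E
              | mu in feasible] in
  fmeas = fmin.
Proof.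
move=> t0 cX qpos X fmin feasible fmeas.
have mX : measurable X := measurable_semialg g.
apply/eqP; rewrite eq_le; apply/andP; split.
- apply: le_ereal_inf_tmp => _ [x Xx <-]; apply: ereal_inf_lbound.
  have qxpos i (it : (i < t)%N) := qpos i it x Xx.
  exists (point_masses q x); first exact: point_masses_feasible mX Xx qxpos t0.
  exact: point_masses_value mX Xx qxpos p.
- apply: le_ereal_inf_tmp => _ [mu [_ [mom norm]] <-].
  apply: ereal_inf_EFin_le => [|c c_le]; last first.
    exact: (ratio_lbound_le_sum_integral mX cX t0 qpos mom norm c_le).
  apply/set0P/negP => /eqP X0; move: norm; rewrite X0 integral_set0.
  by move/(congr1 fine)/eqP; rewrite eq_sym oner_eq0.
Qed.
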